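(* Let $\mathcal S=(\mathcal P,\mathcal L)$ be a linear space with $v$ points and constant line size $k$, $2<k<v$; let $G\le\mathrm{Aut}(\mathcal S)$ be transitive on lines, and let $\mathfrak C$ be a non-trivial $G$-invariant partition of $\mathcal P$ with $d$ classes of size $c$ which is $G$-normal and minimal. Let $K:=G_{(\mathfrak C)}$, $S:=\mathrm{Soc}(K)$, $X:=C_G(K)$ and $Y:=C_G(S)$. Then: (a) either (i) $Y\cap K=1$ and $S$ is non-abelian, or (ii) $Y\cap K=S$ and $S$ is elementary abelian; (b) either (i) $X\cap K=1$, or (ii) $X\cap K=K=S$ and $S$ is elementary abelian; (c) if in addition $\mathfrak C$ is maximal, and there is a non-trivial normal subgroup $N$ of $G$ which is intransitive on $\mathcal P$ and satisfies $N\cap S=1$, then there is a second $G$-normal partition $\mathfrak C'$ of $\mathcal P$ with $c$ classes of size $d$ such that $|C\cap C'|=1$ for all $C\in\mathfrak C$, $C'\in\mathfrak C'$.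
   Context: A linear space: a finite set $\mathcal P$ of points and a set $\mathcal L$ of subsets (lines) such that any two distinct points lie on exactly one line and each line has at least two points. $G_{(\mathfrak C)}$ is the kernel of the action of $G$ on $\mathfrak C$. A $G$-invariant partition is $G$-normal if this kernel is transitive on each class; minimal (resp. maximal) if no non-trivial $G$-invariant partition strictly refines it (resp. is strictly coarser than it). $\mathrm{Soc}$ denotes the socle and $C_G(\cdot)$ the centraliser in $G$. *)

From mathcomp Require Import all_boot all_fingroup all_solvable.
Set Implicit Arguments.
Unset Strict Implicit.
Unset Printing Implicit Defensive.
Local Open Scope group_scope.

Definition linear_space (T : finType) (L : {set {set T}}) : Prop :=
  (forall l, l \in L -> 1 < #|l|) /\
  (forall x y : T, x != y -> exists! l, (l \in L) /\ (x \in l) /\ (y \in l)).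

Definition pimg (T : finType) (g : {perm T}) (A : {set T}) : {set T} :=
  (fun x => g x) @: A.

Definition automorphisms (T : finType) (L : {set {set T}})
    (G : {group {perm T}}) : Prop :=
  forall g, g \in G -> forall l, l \in L -> pimg g l \in L.

Definition line_transitive (T : finType) (L : {set {set T}})
    (G : {group {perm T}}) : Prop :=
  forall l l', l \in L -> l' \in L -> exists2 g, g \in G & pimg g l = l'.

Definition Ginv_partition (T : finType) (G : {group {perm T}})
    (C : {set {set T}}) : Prop :=
  partition C [set: T] /\ forall g, g \in G -> forall B, B \in C -> pimg g B \in C.

Definition nontrivial_partition (T : finType) (C : {set {set T}}) : Prop :=
  C <> [set [set x] | x : T] /\ C <> [set [set: T]].

Definition refines (T : finType) (C' C : {set {set T}}) : Prop :=
  forall B', B' \in C' -> exists2 B, B \in C & B' \subset B.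

(* Kernel G_(C) of the action of G on the classes of C. *)
Definition part_kernel (T : finType) (G : {group {perm T}})
    (C : {set {set T}}) : {set {perm T}} :=
  'C_G(C | ('P)^*).

Definition Gnormal (T : finType) (G : {group {perm T}})
    (C : {set {set T}}) : Prop :=
  Ginv_partition G C /\
  forall B, B \in C -> [transitive part_kernel G C, on B | 'P].

Definition minimal_partition (T : finType) (G : {group {perm T}})
    (C : {set {set T}}) : Prop :=
  forall C', Ginv_partition G C' -> nontrivial_partition C' ->
    refines C' C -> C' = C.

Definition maximal_partition (T : finType) (G : {group {perm T}})
    (C : {set {set T}}) : Prop :=
  forall C', Ginv_partition G C' -> nontrivial_partition C' ->
    refines C C' -> C' = C.

Definition socle (gT : finGroupType) (K : {set gT}) : {set gT} :=
  <<\bigcup_(M : {group gT} | [min M of H | (H :!=: 1) && (H <| K)]) M>>.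

Definition elementary_abelian (gT : finGroupType) (S : {set gT}) : Prop :=
  exists p, p.-abelem S.

From mathcomp Require Import all_boot all_fingroup all_solvable.
From mathcomp Require Import zify.
Set Implicit Arguments.
Unset Strict Implicit.
Unset Printing Implicit Defensive.
Local Open Scope group_scope.

(* The heart of the argument is that every nontrivial abelian subgroup A of
   K = G_(C) normalised by G acts regularly on each class.  By minimality of C
   the A-orbits are the classes.  If A fixed a class B pointwise and moved a
   point, comparing the (equal-sized) pointwise stabilisers of the classes met
   twice by a line shows that every line through a point of B is fixed, so B
   would lie on a line; line transitivity then puts a class on every line, so
   b <= d < v, whereas v <= b since every point lies on at least k lines.
   Hence such an A has order c; it is elementary abelian because Omega_1 of a
   Sylow subgroup of A is characteristic, so also of order c; and every
   subgroup of K centralising A is abelian.  Applying this to Z(S) and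
   C_G(S) :&: K, resp. to Z(K), gives (a) and (b).
   For (c), N :&: K = 1 since a minimal normal subgroup of K inside N would lie
   in S.  Minimality forces the common refinement of C and the N-orbits to be
   the partition into points, and maximality makes N K transitive, so every
   N-orbit meets every class in exactly one point. *)

Section LinearSpace.

Variables (T : finType) (L : {set {set T}}).
Hypothesis linL : linear_space L.

Definition line_through (x y : T) : {set T} :=
  odflt set0 [pick l in L | (x \in l) && (y \in l)].

Lemma line_throughP x y :
  x != y -> [/\ line_through x y \in L, x \in line_through x y & y \in line_through x y].
Proof.
move=> neq_xy; rewrite /line_through; case: pickP => [l /and3P[] // | no_line].
have [l [[lL [xl yl]] _]] := linL.2 x y neq_xy.
by have := no_line l; rewrite lL xl yl.
Qed.

Lemma line_through_uniq l x y :
  l \in L -> x != y -> x \in l -> y \in l -> l = line_through x y.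
Proof.
move=> lL neq_xy xl yl; have [l0 [_ uniq_l]] := linL.2 x y neq_xy.
have [xyL xxy yxy] := line_throughP neq_xy.
by rewrite -(uniq_l l) ?(uniq_l (line_through x y)).
Qed.

Lemma eq_line l l' x y : l \in L -> l' \in L -> x != y ->
  x \in l -> y \in l -> x \in l' -> y \in l' -> l = l'.
Proof.
move=> lL l'L neq_xy *.
by rewrite (line_through_uniq lL neq_xy) // (line_through_uniq l'L neq_xy).
Qed.

Variable k : nat.
Hypotheses (card_line : forall l, l \in L -> #|l| = k) (k_gt1 : 1 < k)
  (k_lt_v : k < #|T|).

Lemma exists_other_point x : exists y : T, y != x.
Proof.
have := cardsD1 x [set: T]; rewrite in_setT cardsT => card_T.
have /set0Pn[y] : [set: T] :\ x != set0 by rewrite -card_gt0; lia.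
by rewrite !inE => /andP[neq_yx _]; exists y.
Qed.

Lemma exists_point_off l : l \in L -> exists y : T, y \notin l.
Proof.
move=> lL; apply/existsP; rewrite -negb_forall; apply/forallP => all_in.
have : #|T| <= #|l| by rewrite -cardsT subset_leq_card //; apply/subsetP => y _; exact: all_in.
by rewrite card_line //; lia.
Qed.

Lemma exists_line_off x : exists2 m, m \in L & x \notin m.
Proof.
have [z neq_zx] := exists_other_point x; rewrite eq_sym in neq_zx.
have [lL xl zl] := line_throughP neq_zx.
have [y yNl] := exists_point_off lL.
have neq_yz : y != z by apply: contraNneq yNl => ->.
have [mL ym zm] := line_throughP neq_yz.
exists (line_through y z) => //; apply: contraNN yNl => xm.
by rewrite (eq_line lL mL neq_zx).
Qed.

(* Projecting a line [m] that misses [x] from [x] injects [m] into the pencil at [x]. *)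
Lemma card_pencil_ge x : k <= #|[set l in L | x \in l]|.
Proof.
have [m mL xNm] := exists_line_off x.
have neq_x p : p \in m -> x != p by move=> pm; apply: contraNneq xNm => ->.
rewrite -(card_line mL) -(card_in_imset (f := line_through x)).
  apply/subset_leq_card/subsetP => _ /imsetP[p pm ->].
  by have [xpL xxp _] := line_throughP (neq_x p pm); rewrite inE xpL.
move=> p q pm qm eq_pq; apply/eqP/negP => /negP neq_pq.
have [xpL xxp pxp] := line_throughP (neq_x p pm).
have [_ _ qxq] := line_throughP (neq_x q qm); rewrite -eq_pq in qxq.
by move: xNm; rewrite -(eq_line xpL mL neq_pq) ?xxp.
Qed.

Lemma card_points_le_lines : #|T| <= #|L|.
Proof.
rewrite -(leq_pmul2r (ltnW k_gt1)).
have double_count : \sum_(l in L) #|l| = \sum_x #|[set l in L | x \in l]|.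
  under eq_bigr do rewrite -sum1_card.
  rewrite (exchange_big_dep predT) //=.
  by apply: eq_bigr => x _; rewrite -sum1_card; apply: eq_bigl => l; rewrite inE.
have -> : (#|L| * k = \sum_(l in L) #|l|)%N.
  by rewrite (eq_bigr (fun _ => k)) ?sum_nat_const // => l lL; rewrite card_line.
have -> : (#|T| * k = \sum_(x : T) k)%N by rewrite sum_nat_const cardT.
by rewrite double_count leq_sum // => x _; apply: card_pencil_ge.
Qed.

End LinearSpace.

Section PermImage.

Variable T : finType.
Implicit Types (g : {perm T}) (A : {group {perm T}}) (B : {set T}).

Lemma pimgE g B : pimg g B = ('P^*)%act B g. Proof. by []. Qed.

Lemma mem_pimg g B x : x \in B -> g x \in pimg g B.
Proof. exact: imset_f. Qed.

Lemma pimg_orbit A g x : pimg g (orbit 'P A x) = orbit 'P (A :^ g) (g x).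
Proof. exact: (setact_orbit 'P A x g). Qed.

Lemma pimg_orbit_id A a x : a \in A -> pimg a (orbit 'P A x) = orbit 'P A x.
Proof. by move=> aA; rewrite pimg_orbit conjGid // (orbit_act 'P). Qed.

End PermImage.

Lemma aut_fix_line (T : finType) (L : {set {set T}}) (G : {group {perm T}}) g l p q :
  linear_space L -> automorphisms L G -> g \in G -> l \in L -> p != q ->
  p \in l -> q \in l -> g p = p -> g q = q -> pimg g l = l.
Proof.
move=> linL autG gG lL neq_pq pl ql gp gq.
apply: (eq_line linL (autG g gG l lL) lL neq_pq) => //.
  by rewrite -{1}gp mem_pimg.
by rewrite -{1}gq mem_pimg.
Qed.

Section AbelianTransitive.

Variables (T : finType) (A : {group {perm T}}) (B : {set T}).
Hypotheses (abA : abelian A) (trA : [transitive A, on B | 'P]).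

Lemma abelian_transitive_stab x : x \in B -> 'C_A[x | 'P] = 'C_A(B | 'P).
Proof.
move=> xB; apply/setP => a; rewrite !inE; apply: andb_id2l => aA.
rewrite /= sub1set inE; apply/idP/idP => [/eqP ax | /subsetP fixB]; last first.
  by have := fixB x xB; rewrite inE.
apply/subsetP => y; rewrite inE -(atransP trA x xB) => /orbitP[b bA <-] /=.
by move: ax; rewrite /aperm -permM -(centsP abA a aA b bA) permM => ->.
Qed.

Lemma abelian_transitive_cent g x : g \in 'C(A) -> x \in B -> g x \in B ->
  exists2 a, a \in A & {in B, forall y, g y = a y}.
Proof.
move=> cAg xB gxB; have [a aA gx] := atransP2 trA xB gxB.
exists a => // _ /(atransP2 trA xB)[b bA ->].
rewrite /= /aperm -permM -(centP cAg b bA) permM gx /=.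
by rewrite /aperm -!permM (centsP abA a aA b bA).
Qed.

End AbelianTransitive.

Section Partitions.

Variable T : finType.
Implicit Types (g : {perm T}) (A G : {group {perm T}}) (B : {set T}) (P Q : {set {set T}}).

Section PartitionOfT.

Variable P : {set {set T}}.
Hypothesis partP : partition P [set: T].

Lemma cover_partT : cover P = [set: T].
Proof. by case/and3P: partP => /eqP. Qed.

Lemma pblockT_mem x : pblock P x \in P.
Proof. by rewrite pblock_mem // cover_partT. Qed.

Lemma mem_pblockT x : x \in pblock P x.
Proof. by rewrite mem_pblock cover_partT. Qed.

Lemma pblockT_eq B x : B \in P -> x \in B -> pblock P x = B.
Proof. by case/and3P: partP => _ trivP _; apply: def_pblock. Qed.

Lemma partT_nonempty B : B \in P -> exists x, x \in B.
Proof.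
by case/and3P: partP => _ _ P0 BP; apply/set0Pn; apply: contraNneq P0 => <-.
Qed.

Lemma partT_points :
  (forall B, B \in P -> #|B| <= 1) -> P = [set [set x] | x : T].
Proof.
have single B x : B \in P -> #|B| <= 1 -> x \in B -> B = [set x].
  by move=> BP small xB; apply/eqP; rewrite eq_sym eqEcard sub1set xB cards1.
move=> small; apply/setP => B; apply/idP/imsetP => [BP | [x _ ->]].
  have [x xB] := partT_nonempty BP.
  by exists x; last exact: single BP (small B BP) xB.
have Px := pblockT_mem x.
by rewrite -(single _ x Px (small _ Px) (mem_pblockT x)).
Qed.

End PartitionOfT.

Section InvariantPartition.

Variables (G : {group {perm T}}) (P : {set {set T}}).
Hypothesis invP : Ginv_partition G P.

Lemma pimg_pblock g x : g \in G -> pimg g (pblock P x) = pblock P (g x).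
Proof.
move=> gG; have [partP imP] := invP.
by apply/esym/(pblockT_eq partP (imP g gG _ (pblockT_mem partP x)))/mem_pimg/mem_pblockT.
Qed.

Lemma part_kernelP g :
  reflect (g \in G /\ forall B, B \in P -> pimg g B = B) (g \in part_kernel G P).
Proof.
rewrite /part_kernel; apply: (iffP setIP) => [[gG /astabP fixP] | [gG fixP]]; split=> //.
by apply/astabP => B /fixP.
Qed.

Lemma part_kernel_class g B x : g \in part_kernel G P -> B \in P -> x \in B -> g x \in B.
Proof. by case/part_kernelP => _ fixP BP xB; rewrite -(fixP B BP) mem_pimg. Qed.

Lemma part_kernel_norm : G \subset 'N(part_kernel G P).
Proof.
apply: normsI; first exact: normG.
apply: subset_trans (astab_norm _ _); apply/subsetP => g gG.
apply/astabsP => B /=; apply/idP/idP => [gBP | BP]; last exact: invP.2.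
by have := invP.2 g^-1 (groupVr gG) _ gBP; rewrite pimgE actK.
Qed.

End InvariantPartition.

Lemma part_kernel_group_set G P : group_set (part_kernel G P).
Proof. exact: groupP. Qed.
Canonical part_kernel_group G P := Group (part_kernel_group_set G P).

Lemma abelian_kernel_cent G P A (H : {group {perm T}}) :
    partition P [set: T] -> abelian A -> (forall B, B \in P -> [transitive A, on B | 'P]) ->
  H \subset part_kernel G P -> H \subset 'C(A) -> abelian H.
Proof.
move=> partP abA trA sHK cAH; apply/centsP => s sH t tH; apply/permP => x.
have [Px xPx] := (pblockT_mem partP x, mem_pblockT partP x).
have on_block h : h \in H -> exists2 a, a \in A & {in pblock P x, forall y, h y = a y}.
  move=> hH; apply: (abelian_transitive_cent abA (trA _ Px) (subsetP cAH h hH) xPx).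
  exact: part_kernel_class (subsetP sHK h hH) Px xPx.
have [[a aA sa] [b bA tb]] := (on_block s sH, on_block t tH).
have [axP bxP] : a x \in pblock P x /\ b x \in pblock P x.
  by rewrite -sa // -tb //; split; apply: part_kernel_class Px xPx; apply: (subsetP sHK).
by rewrite !permM sa // tb // tb // sa // -!permM (centsP abA a aA b bA).
Qed.

Definition orbit_part A : {set {set T}} := orbit 'P A @: [set: T].

Lemma orbit_part_partition A : partition (orbit_part A) [set: T].
Proof. by apply: orbit_partition; apply/subsetP => a _; apply/astabsP => x; rewrite !inE. Qed.

Lemma orbit_part_Ginv G A : G \subset 'N(A) -> Ginv_partition G (orbit_part A).
Proof.
move=> nAG; split=> [|g gG _ /imsetP[x _ ->]]; first exact: orbit_part_partition.
by rewrite pimg_orbit (normP (subsetP nAG g gG)) imset_f.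
Qed.

Lemma orbit_part_Gnormal G A : A <| G -> Gnormal G (orbit_part A).
Proof.
case/andP=> sAG nAG; split=> [|_ /imsetP[x _ ->]]; first exact: orbit_part_Ginv.
have sAK : A \subset part_kernel G (orbit_part A).
  apply/subsetP => a aA; apply/part_kernelP; split; first exact: (subsetP sAG).
  by move=> _ /imsetP[y _ ->]; apply: pimg_orbit_id.
apply/imsetP; exists x; first exact: orbit_refl.
apply/eqP; rewrite eqEsubset (subset_trans _ (imsetS _ sAK)) //=.
apply/subsetP => _ /imsetP[g gK ->].
by apply: part_kernel_class gK _ (orbit_refl _ _ _); apply: imset_f.
Qed.

Lemma orbit_part_neq_points A : A :!=: 1 -> orbit_part A != [set [set x] | x : T].
Proof.
case/trivgPn=> a aA nt_a; apply/eqP => orbits1.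
have [x ax] : exists x, a x != x.
  apply/existsP; rewrite -negb_forall; apply: contra nt_a => /forallP fix_a.
  by apply/eqP/permP => x; rewrite perm1; apply/eqP.
have : orbit 'P A x \in orbit_part A by apply: imset_f.
rewrite orbits1 => /imsetP[z _ Ox].
have := mem_orbit 'P x aA; have := orbit_refl 'P A x.
rewrite Ox !inE => /eqP x_z /eqP ax_z.
by move: ax; rewrite /= /aperm in ax_z; rewrite ax_z x_z eqxx.
Qed.

Lemma orbit_part_neq_setT A :
  ~~ [transitive A, on [set: T] | 'P] -> orbit_part A != [set [set: T]].
Proof.
by apply: contraNneq => orbitsT; have := set11 [set: T]; rewrite -orbitsT.
Qed.

Definition meet_part P Q : {set {set T}} := [set pblock P x :&: pblock Q x | x : T].

Section MeetPartition.

Variables (P Q : {set {set T}}).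
Hypotheses (partP : partition P [set: T]) (partQ : partition Q [set: T]).

Lemma meet_part_preim :
  meet_part P Q = preim_partition (fun x => (pblock P x, pblock Q x)) [set: T].
Proof.
have block x : pblock P x :&: pblock Q x =
    [set y in [set: T] | (pblock P x, pblock Q x) == (pblock P y, pblock Q y)].
  apply/setP => y; rewrite !inE xpair_eqE /=.
  apply/andP/andP => [[yPx yQx] | [/eqP-> /eqP->]]; last by rewrite !mem_pblockT.
  by rewrite (pblockT_eq partP (pblockT_mem partP x) yPx)
             (pblockT_eq partQ (pblockT_mem partQ x) yQx).
by apply/setP => B; apply/imsetP/imsetP => -[x _ ->]; exists x; rewrite ?block.
Qed.

Lemma meet_part_partition : partition (meet_part P Q) [set: T].
Proof. by rewrite meet_part_preim; apply: preim_partitionP. Qed.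

Lemma pblock_meet_part x : pblock (meet_part P Q) x = pblock P x :&: pblock Q x.
Proof.
apply: (pblockT_eq meet_part_partition); first exact: imset_f.
by rewrite inE !mem_pblockT.
Qed.

Lemma meet_part_Ginv G : Ginv_partition G P -> Ginv_partition G Q ->
  Ginv_partition G (meet_part P Q).
Proof.
move=> invP invQ; split=> [|g gG _ /imsetP[x _ ->]]; first exact: meet_part_partition.
rewrite /pimg imsetI; last by move=> y z _ _; apply: perm_inj.
by rewrite -!/(pimg g _) (pimg_pblock invP) // (pimg_pblock invQ) //; apply: imset_f.
Qed.

Lemma meet_part_refines_l : refines (meet_part P Q) P.
Proof. by move=> _ /imsetP[x _ ->]; exists (pblock P x); rewrite ?pblockT_mem ?subsetIl. Qed.

Lemma meet_part_refines_r : refines (meet_part P Q) Q.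
Proof. by move=> _ /imsetP[x _ ->]; exists (pblock Q x); rewrite ?pblockT_mem ?subsetIr. Qed.

End MeetPartition.

Lemma pblock_orbit_part A x : pblock (orbit_part A) x = orbit 'P A x.
Proof.
by rewrite (pblockT_eq (orbit_part_partition A) (imset_f _ (in_setT x))) ?orbit_refl.
Qed.

End Partitions.

Section ExtremalPartition.

Variables (T : finType) (G : {group {perm T}}) (C : {set {set T}}).
Hypotheses (invC : Ginv_partition G C) (ntC : nontrivial_partition C).

Let partC := invC.1.

Lemma class_neq_setT B : B \in C -> B != [set: T].
Proof.
move=> BC; apply/eqP => BT; apply: ntC.2; apply/setP => B'; rewrite inE.
apply/idP/eqP => [B'C | ->]; last by rewrite -BT.
have [x xB'] := partT_nonempty partC B'C.
by rewrite -(pblockT_eq partC B'C xB') (pblockT_eq partC BC) // BT.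
Qed.

Lemma refines_neq_setT P : refines P C -> P != [set [set: T]].
Proof.
move=> refPC; apply/eqP => PT; have [|B BC sTB] := refPC [set: T]; first by rewrite PT set11.
by move/negP: (class_neq_setT BC); apply; rewrite eqEsubset subsetT.
Qed.

Lemma coarsening_neq_points P : refines C P -> P != [set [set x] | x : T].
Proof.
move=> refCP; apply/eqP => Ppts; apply: ntC.1; apply: (partT_points partC) => B BC.
have [B'] := refCP B BC; rewrite Ppts => /imsetP[x _ ->] sBx.
by rewrite -(cards1 x) subset_leq_card.
Qed.

Lemma card_class_gt1 c : (forall B, B \in C -> #|B| = c) -> 1 < c.
Proof.
move=> card_class; rewrite ltnNge; apply/negP => c_le1; apply: ntC.1.
by apply: (partT_points partC) => B BC; rewrite card_class.
Qed.

Lemma minimal_refinement_eq P : minimal_partition G C -> Ginv_partition G P ->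
  refines P C -> P != [set [set x] | x : T] -> P = C.
Proof.
move=> minC invP refPC Pnpts; apply: minC => //.
by split; apply/eqP; last exact: refines_neq_setT.
Qed.

Lemma maximal_coarsening_eq P : maximal_partition G C -> Ginv_partition G P ->
  refines C P -> P != [set [set: T]] -> P = C.
Proof.
move=> maxC invP refCP PnT; apply: maxC => //.
by split; apply/eqP; first exact: coarsening_neq_points.
Qed.

Hypothesis minC : minimal_partition G C.

Lemma normal_in_kernel_transitive (A : {group {perm T}}) :
  A \subset part_kernel G C -> G \subset 'N(A) -> A :!=: 1 ->
  forall B, B \in C -> [transitive A, on B | 'P].
Proof.
move=> sAK nAG ntA; have refAC : refines (orbit_part A) C.
  move=> _ /imsetP[x _ ->]; exists (pblock C x); first exact: pblockT_mem.
  apply/subsetP => _ /orbitP[a aA <-].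
  exact: part_kernel_class (subsetP sAK a aA) (pblockT_mem partC x) (mem_pblockT partC x).
have eqAC := minimal_refinement_eq minC (orbit_part_Ginv nAG) refAC
  (orbit_part_neq_points ntA).
by move=> B; rewrite -eqAC => /imsetP[x _ ->]; apply: atrans_orbit.
Qed.

End ExtremalPartition.

Section Socle.

Variables (gT : finGroupType) (K : {group gT}).

Local Notation minnormal M := [min M of H | (H :!=: 1) && (H <| K)].

Lemma socle_group_set : group_set (socle K).
Proof. exact: groupP. Qed.
Canonical socle_group := Group socle_group_set.

Lemma minnormal_sub_socle (M : {group gT}) : minnormal M -> M \subset socle K.
Proof. by move=> minM; apply/sub_gen/(bigcup_sup M). Qed.

Lemma socle_sub : socle K \subset K.
Proof.
by rewrite gen_subG; apply/bigcupsP => M /mingroupp/andP[_ /normal_sub].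
Qed.

Lemma normal_meet_socle (H : {group gT}) : H <| K -> H :!=: 1 -> H :&: socle K :!=: 1.
Proof.
move=> nHK ntH; have [M minM sMH] : {M : {group gT} | minnormal M & M \subset H}.
  by apply: mingroup_exists; rewrite ntH.
have /andP[ntM _] := mingroupp minM.
by apply: subG1_contra ntM; rewrite subsetI sMH minnormal_sub_socle.
Qed.

Lemma socle_neq1 : K :!=: 1 -> socle K :!=: 1.
Proof.
by move=> ntK; have := normal_meet_socle (normal_refl K) ntK; rewrite (setIidPr socle_sub).
Qed.

Lemma minnormalJ (M : {group gT}) g : g \in 'N(K) -> minnormal M -> minnormal (M :^ g)%G.
Proof.
move=> nKg /mingroupP[/andP[ntM nMK] minM]; apply/mingroupP; split.
  by rewrite /= conjsg_eq1 ntM -(normP nKg) normalJ.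
move=> H /andP[ntH nHK] sHMg.
have nKgV : g^-1 \in 'N(K) by rewrite groupV.
have := minM (H :^ g^-1)%G; rewrite /= conjsg_eq1 ntH -(normP nKgV) normalJ nHK.
by rewrite sub_conjgV => /(_ isT sHMg) <-; rewrite conjsgKV.
Qed.

Lemma socle_norm : 'N(K) \subset 'N(socle K).
Proof.
apply: norms_gen; apply/normsP => g nKg; apply/eqP; rewrite eqEcard cardJg leqnn andbT.
apply/subsetP => _ /imsetP[y /bigcupP[M minM yM] ->].
by apply/bigcupP; exists (M :^ g)%G; rewrite ?minnormalJ ?memJ_conjg.
Qed.

End Socle.

Lemma abelian_abelem_char (gT : finGroupType) (A : {group gT}) : abelian A -> A :!=: 1 ->
  exists p (P : {group gT}), [/\ P \char A, P :!=: 1 & p.-abelem P].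
Proof.
move=> abA ntA; have A_gt1 : 1 < #|A| by rewrite ltnNge -trivg_card_le1.
pose p := pdiv #|A|; have p_pr : prime p := pdiv_prime A_gt1.
have [x xA ox] := Cauchy p_pr (pdiv_dvd #|A|).
exists p, ('Ohm_1('O_p(A)))%G; split.
- exact: char_trans (Ohm_char 1 _) (pcore_char p A).
- rewrite Ohm1_eq1; apply/trivgPn; exists x; last by rewrite -order_gt1 ox prime_gt1.
  apply: (subsetP (pcore_max _ _)) (cycle_id x); first by rewrite /pgroup -orderE ox pnat_id.
  by rewrite -sub_abelian_normal // cycle_subG.
- by apply: Ohm1_abelem; [exact: pcore_pgroup | exact: abelianS (pcore_sub _ _) abA].
Qed.

Section LineTransitiveKernel.

Variables (T : finType) (L : {set {set T}}) (k : nat).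
Variables (G : {group {perm T}}) (C : {set {set T}}) (c : nat).
Hypotheses (linL : linear_space L) (card_line : forall l, l \in L -> #|l| = k)
  (k_gt1 : 1 < k) (k_lt_v : k < #|T|).
Hypotheses (autG : automorphisms L G) (ltG : line_transitive L G).
Hypotheses (invC : Ginv_partition G C) (card_class : forall B, B \in C -> #|B| = c)
  (c_gt1 : 1 < c).

Let partC := invC.1.

Lemma class_two_points B : B \in C -> exists p q, [/\ p \in B, q \in B & p != q].
Proof. by move=> BC; apply/card_gt1P; rewrite card_class. Qed.

Lemma line_meets_class_twice l : l \in L -> exists2 E, E \in C & 1 < #|E :&: l|.
Proof.
move=> lL; have /card_gt0P[x0 _] : 0 < #|T| by lia.
have Bx0 := pblockT_mem partC x0.
have [p [q [pB qB neq_pq]]] := class_two_points Bx0.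
have [pqL ppq qpq] := line_throughP linL neq_pq.
have [g gG pqg_l] := ltG pqL lL.
exists (pimg g (pblock C x0)); first exact: invC.2.
apply/card_gt1P; exists (g p), (g q).
by rewrite !inE -pqg_l !mem_pimg // (inj_eq perm_inj).
Qed.

Lemma class_not_collinear B m : B \in C -> m \in L -> B \subset m -> False.
Proof.
move=> BC mL sBm; pose line_of (E : {set T}) := odflt set0 [pick l in L | E \subset l].
have cover_lines : L \subset line_of @: C.
  apply/subsetP => l lL; have [g gG mg_l] := ltG mL lL.
  have gBC : pimg g B \in C := invC.2 g gG B BC.
  have sgBl : pimg g B \subset l by rewrite -mg_l imsetS.
  apply/imsetP; exists (pimg g B) => //; rewrite /line_of.
  case: pickP => [l' /andP[l'L sgBl'] | /(_ l)]; last by rewrite lL sgBl.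
  have [p [q [pB qB neq_pq]]] := class_two_points gBC.
  by rewrite /= (eq_line linL lL l'L neq_pq) ?(subsetP sgBl) ?(subsetP sgBl').
have card_T : #|T| = (c * #|C|)%N.
  rewrite -cardsT (card_partition partC) (eq_bigr (fun _ => c)) ?sum_nat_const //.
  by rewrite mulnC.
have b_le_d := leq_trans (subset_leq_card cover_lines) (leq_imset_card line_of C).
have v_le_b := card_points_le_lines linL card_line k_gt1 k_lt_v.
by move: (k_lt_v) (c_gt1) card_T v_le_b b_le_d; move: #|T| #|L| #|C|; nia.
Qed.

Section AbelianTransitiveSubgroup.

Variable A : {group {perm T}}.
Hypotheses (sAK : A \subset part_kernel G C) (abA : abelian A)
  (trA : forall B, B \in C -> [transitive A, on B | 'P]).

Lemma card_pstab_class B : B \in C -> (#|'C_A(B | 'P)| * c)%N = #|A|.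
Proof.
move=> BC; have [x xB] := partT_nonempty partC BC.
rewrite -(abelian_transitive_stab abA (trA BC) xB) -(card_orbit_stab 'P A x).
by rewrite (atransP (trA BC) x xB) card_class // mulnC.
Qed.

Lemma pstab_class_fix_line B a x l : B \in C -> a \in 'C_A(B | 'P) ->
  x \in B -> l \in L -> x \in l -> pimg a l = l.
Proof.
move=> BC aCB xB lL xl; have sAG := subset_trans sAK (subsetIl _ _).
have fix_line E u p q : u \in 'C_A(E | 'P) -> p \in E -> q \in E -> p != q ->
    p \in l -> q \in l -> pimg u l = l.
  case/setIP=> uA /astabP fixE pE qE neq_pq pl ql.
  exact: aut_fix_line linL autG (subsetP sAG u uA) lL neq_pq pl ql (fixE p pE) (fixE q qE).
have [/exists_inP[x' x'l /andP[x'B neq_x'x]] | no_other] :=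
  boolP [exists x' in l, (x' \in B) && (x' != x)].
  exact: fix_line aCB x'B xB neq_x'x x'l xl.
(* A class [E] with two points on [l] has the same pointwise stabiliser as [B]. *)
have [E EC /card_gt1P[p [q [/setIP[pE pl] /setIP[qE ql] neq_pq]]]] :=
  line_meets_class_twice lL.
have sCE_CB : 'C_A(E | 'P) \subset 'C_A(B | 'P).
  rewrite -(abelian_transitive_stab abA (trA BC) xB).
  apply/subsetP => u uCE; have /setIP[uA _] := uCE; rewrite inE uA; apply/astab1P.
  have uxl : u x \in l by rewrite -(fix_line E u p q) ?mem_pimg.
  have uxB : u x \in B := part_kernel_class (subsetP sAK u uA) BC xB.
  apply/eqP; apply: contraNT no_other => neq_uxx.
  by apply/exists_inP; exists (u x); rewrite ?uxB.
have eq_CE_CB : 'C_A(E | 'P) = 'C_A(B | 'P).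
  apply/eqP; rewrite eqEcard sCE_CB /= -(leq_pmul2r (ltnW c_gt1)).
  by rewrite !card_pstab_class.
by apply: fix_line pE qE neq_pq pl ql; rewrite eq_CE_CB.
Qed.

Lemma pstab_class_trivial B : B \in C -> 'C_A(B | 'P) = 1.
Proof.
move=> BC; apply/trivgP/subsetP => a aCB; rewrite inE; apply/eqP/permP => y.
rewrite perm1; apply/eqP/negPn/negP => neq_ay.
have /setIP[_ /astabP fixB] := aCB.
have yNB : y \notin B by apply: contra neq_ay => yB; rewrite -[X in _ == X](fixB y yB).
rewrite eq_sym in neq_ay; have [yayL yl ayl] := line_throughP linL neq_ay.
apply: (class_not_collinear BC yayL); apply/subsetP => x xB.
have neq_xy : x != y by apply: contraNneq yNB => <-.
have [xyL xxy yxy] := line_throughP linL neq_xy.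
have fix_xy := pstab_class_fix_line BC aCB xB xyL xxy.
have ayxy : a y \in line_through L x y by rewrite -fix_xy mem_pimg.
by rewrite -(line_through_uniq linL xyL neq_ay yxy ayxy).
Qed.

Lemma card_abelian_transitive_kernel : #|A| = c.
Proof.
have /card_gt0P[x _] : 0 < #|T| by lia.
have Bx := pblockT_mem partC x.
by rewrite -(card_pstab_class Bx) (pstab_class_trivial Bx) cards1 mul1n.
Qed.

End AbelianTransitiveSubgroup.

Hypotheses (ntC : nontrivial_partition C) (normC : Gnormal G C)
  (minC : minimal_partition G C).

Local Notation K := (part_kernel G C).
Local Notation S := (socle K).

Lemma abelian_normal_kernel_card (A : {group {perm T}}) :
  A \subset K -> G \subset 'N(A) -> abelian A -> A :!=: 1 -> #|A| = c.
Proof.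
move=> sAK nAG abA ntA; apply: (card_abelian_transitive_kernel sAK abA).
exact: (normal_in_kernel_transitive invC ntC minC sAK nAG ntA).
Qed.

Lemma abelian_normal_kernel_abelem (A : {group {perm T}}) :
  A \subset K -> G \subset 'N(A) -> abelian A -> A :!=: 1 -> elementary_abelian A.
Proof.
move=> sAK nAG abA ntA; have [p [P [charP ntP abelP]]] := abelian_abelem_char abA ntA.
have sPA := char_sub charP.
have sPK := subset_trans sPA sAK; have nPG := char_norm_trans charP nAG.
have abP := abelianS sPA abA.
have -> : A :=: P.
  by apply/eqP; rewrite eq_sym eqEcard sPA !abelian_normal_kernel_card ?leqnn.
by exists p.
Qed.

Lemma cent_abelian_normal_kernel (A H : {group {perm T}}) :
    A \subset K -> G \subset 'N(A) -> abelian A -> A :!=: 1 ->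
  H \subset K -> H \subset 'C(A) -> abelian H.
Proof.
move=> sAK nAG abA ntA; apply: abelian_kernel_cent partC abA _.
exact: (normal_in_kernel_transitive invC ntC minC sAK nAG ntA).
Qed.

Lemma kernel_neq1 : K :!=: 1.
Proof.
have /card_gt0P[x _] : 0 < #|T| by lia.
have Bx := pblockT_mem partC x.
have [p [q [pB qB neq_pq]]] := class_two_points Bx.
have [g gK qg] := atransP2 (normC.2 _ Bx) pB qB.
apply/trivgPn; exists g => //.
by apply: contraNneq neq_pq => g1; rewrite qg g1 /= /aperm perm1.
Qed.

Lemma socle_kernel_norm : G \subset 'N(S).
Proof. exact: subset_trans (part_kernel_norm invC) (socle_norm _). Qed.

Lemma socle_cent_dichotomy :
  ('C_G(S) :&: K = 1 /\ ~~ abelian S) \/ ('C_G(S) :&: K = S /\ elementary_abelian S).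
Proof.
set Z := 'C_G(S) :&: K.
have [sSK ntS] := (socle_sub K, socle_neq1 kernel_neq1).
have sSG : S \subset G := subset_trans sSK (subsetIl _ _).
have [sZK cSZ] : Z \subset K /\ Z \subset 'C(S).
  by rewrite subsetIr (subset_trans (subsetIl _ _) (subsetIr _ _)).
have nZG : G \subset 'N(Z) :=
  normsI (normsI (normG G) (norms_cent socle_kernel_norm)) (part_kernel_norm invC).
have [Z1 | ntZ] := eqVneq (Z : {set _}) 1.
  left; split=> //; apply: contra ntS => abS.
  have sSZ : S \subset Z by rewrite subsetI sSK andbT subsetI sSG.
  by apply/eqP/trivgP; rewrite -Z1.
right.
have nZK : Z <| K by rewrite /normal sZK (subset_trans (subsetIl _ _) nZG).
(* A minimal normal subgroup of [K] inside [Z] lies in the centre of [S]. *)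
have ntZS : 'Z(S) :!=: 1.
  apply: subG1_contra (normal_meet_socle nZK ntZ).
  by rewrite subsetI subsetIr (subset_trans (subsetIl _ _) cSZ).
have nZSG : G \subset 'N('Z(S)) by rewrite normsI ?norms_cent ?socle_kernel_norm.
have sZSK : 'Z(S) \subset K := subset_trans (center_sub _) sSK.
have abS : abelian S.
  apply: cent_abelian_normal_kernel sZSK nZSG (center_abelian _) ntZS sSK _.
  by rewrite centsC subsetIr.
have abZ : abelian Z := cent_abelian_normal_kernel sSK socle_kernel_norm abS ntS sZK cSZ.
have eqSZ : S :=: Z.
  apply/eqP; rewrite eqEcard subsetI sSK andbT subsetI sSG -/(abelian S) abS.
  by rewrite (abelian_normal_kernel_card sZK nZG abZ ntZ)
             (abelian_normal_kernel_card sSK socle_kernel_norm abS ntS) leqnn.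
split; first by rewrite -eqSZ.
exact: abelian_normal_kernel_abelem sSK socle_kernel_norm abS ntS.
Qed.

Lemma kernel_cent_dichotomy :
  'C_G(K) :&: K = 1 \/ ('C_G(K) :&: K = K /\ K = S /\ elementary_abelian S).
Proof.
set Z := 'C_G(K) :&: K.
have [sZK cKZ] : Z \subset K /\ Z \subset 'C(K).
  by rewrite subsetIr (subset_trans (subsetIl _ _) (subsetIr _ _)).
have nZG : G \subset 'N(Z) :=
  normsI (normsI (normG G) (norms_cent (part_kernel_norm invC))) (part_kernel_norm invC).
have [Z1 | ntZ] := eqVneq (Z : {set _}) 1; [by left | right].
have abZ : abelian Z := subset_trans cKZ (centS sZK).
have abK : abelian K.
  by apply: cent_abelian_normal_kernel sZK nZG abZ ntZ (subxx _) _; rewrite centsC.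
have [sSK ntS] := (socle_sub K, socle_neq1 kernel_neq1).
have abS := abelianS sSK abK.
have eqKS : K :=: S.
  apply/eqP; rewrite eq_sym eqEcard sSK.
  by rewrite (abelian_normal_kernel_card (subxx _) (part_kernel_norm invC) abK kernel_neq1)
             (abelian_normal_kernel_card sSK socle_kernel_norm abS ntS) leqnn.
have eqZK : Z :=: K.
  by apply/eqP; rewrite eqEsubset sZK subsetI subxx andbT subsetI subsetIl.
split; [exact: eqZK | split; first exact: eqKS].
exact: abelian_normal_kernel_abelem sSK socle_kernel_norm abS ntS.
Qed.

End LineTransitiveKernel.

Section TransversePartition.

Variables (T : finType) (G N : {group {perm T}}) (C : {set {set T}}).
Hypotheses (invC : Ginv_partition G C) (ntC : nontrivial_partition C)
  (normC : Gnormal G C) (minC : minimal_partition G C) (maxC : maximal_partition G C).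
Hypotheses (nsNG : N <| G) (ntN : N :!=: 1) (intrN : ~~ [transitive N, on [set: T] | 'P])
  (trivNS : N :&: socle (part_kernel G C) = 1).

Local Notation K := (part_kernel G C).

Let partC := invC.1.

Lemma normal_meet_kernel_trivial : N :&: K = 1.
Proof.
have [sNG nNG] := andP nsNG.
apply/eqP/negPn/negP => ntNK.
have nsNKK : N :&: K <| K.
  by rewrite /normal subsetIr normsI ?normG // (subset_trans (subsetIl _ _) nNG).
have := normal_meet_socle nsNKK ntNK.
by apply/negP; rewrite negbK -subG1 -trivNS setSI ?subsetIl.
Qed.

Lemma orbit_part_neq_classes (H : {group {perm T}}) :
  N \subset H -> H \subset G -> orbit_part H != C.
Proof.
move=> sNH sHG; apply/eqP => orbitsC; apply/negP: ntN; rewrite negbK -subG1.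
rewrite -normal_meet_kernel_trivial subsetI subxx; apply/subsetP => n nN.
apply/part_kernelP; split; first exact: subsetP (normal_sub nsNG) n nN.
by move=> B; rewrite -orbitsC => /imsetP[x _ ->]; apply/pimg_orbit_id/(subsetP sNH).
Qed.

Lemma coarser_orbit_part_transitive (H : {group {perm T}}) :
  N \subset H -> H <| G -> refines C (orbit_part H) -> [transitive H, on [set: T] | 'P].
Proof.
move=> sNH /andP[sHG nHG] refCH; apply: contraTT isT => intrH.
have := maximal_coarsening_eq invC ntC maxC (orbit_part_Ginv nHG) refCH.
by move/(_ (orbit_part_neq_setT intrH))/eqP; rewrite (negPf (orbit_part_neq_classes sNH sHG)).
Qed.

Lemma orbit_meet_class x y : y \in pblock C x -> y \in orbit 'P N x -> y = x.
Proof.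
move=> yCx yNx; have partN := orbit_part_partition N.
set M := meet_part C (orbit_part N).
have partM : partition M [set: T] := meet_part_partition partC partN.
have invM : Ginv_partition G M.
  exact: (meet_part_Ginv partC partN invC (orbit_part_Ginv (normal_norm nsNG))).
have [Mpts | ntM] := eqVneq M [set [set z] | z : T].
  have := pblockT_mem partM x; rewrite {2}Mpts => /imsetP[z _ Mxz].
  have yMx : y \in pblock M x by rewrite pblock_meet_part // pblock_orbit_part inE yCx.
  by move: yMx (mem_pblockT partM x); rewrite Mxz !inE => /eqP-> /eqP->.
(* Otherwise [M = C] by minimality, so the orbits of [N] would be unions of classes. *)
have eqMC := minimal_refinement_eq invC ntC minC invM (meet_part_refines_l partC) ntM.
have := meet_part_refines_r (P := C) partN; rewrite -/M eqMC => refCN.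
by have := coarser_orbit_part_transitive (subxx N) nsNG refCN; rewrite (negPf intrN).
Qed.

Lemma orbit_meets_class x B : B \in C -> exists2 n, n \in N & n x \in B.
Proof.
move=> BC; have [sNG nNG] := andP nsNG; have sKG : K \subset G := subsetIl _ _.
have nsNKG : N <*> K <| G.
  by rewrite /normal join_subG sNG sKG normsY ?(part_kernel_norm invC).
have refC_NK : refines C (orbit_part (N <*> K)).
  move=> E EC; have [z zE] := partT_nonempty partC EC.
  exists (orbit 'P (N <*> K) z); first exact: imset_f.
  by rewrite -(atransP (normC.2 E EC) z zE) imsetS ?joing_subr.
have trNK := coarser_orbit_part_transitive (joing_subl _ _) nsNKG refC_NK.
have [y yB] := partT_nonempty partC BC.
have /orbitP[_ /mulsgP[n g nN gK ->] xng] : y \in orbit 'P (N * K) x.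
  by rewrite -norm_joinEr ?(subset_trans sKG) // (atransP trNK) ?inE.
have gnx : g (n x) = y by rewrite -permM -xng.
exists n => //; rewrite -(permK g (n x)) gnx.
exact: part_kernel_class (groupVr gK) BC yB.
Qed.

Lemma card_orbit_part B : B \in C -> #|orbit_part N| = #|B|.
Proof.
move=> BC; have -> : orbit_part N = orbit 'P N @: B.
  apply/setP => O; apply/imsetP/imsetP => -[z _ ->]; last by exists z.
  by have [n nN nzB] := orbit_meets_class z BC; exists (n z); rewrite ?(orbit_act 'P z nN).
rewrite card_in_imset // => y z yB zB eq_yz; apply: esym; apply: orbit_meet_class.
  by rewrite (pblockT_eq partC BC yB).
by rewrite eq_yz orbit_refl.
Qed.

Lemma card_orbit_classes x : #|orbit 'P N x| = #|C|.
Proof.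
have -> : C = pblock C @: orbit 'P N x.
  apply/setP => B; apply/idP/imsetP => [BC | [y _ ->]]; last exact: pblockT_mem.
  have [n nN nxB] := orbit_meets_class x BC.
  by exists (n x); rewrite ?(mem_orbit 'P x nN) ?(pblockT_eq partC BC nxB).
rewrite [RHS]card_in_imset // => y z yNx zNx eq_yz; apply/esym/orbit_meet_class.
  by rewrite eq_yz mem_pblockT.
by move/orbit_eqP: yNx => ->.
Qed.

Lemma card_class_meet_orbit B x : B \in C -> #|B :&: orbit 'P N x| = 1%N.
Proof.
move=> BC; have [n nN nxB] := orbit_meets_class x BC.
suff -> : B :&: orbit 'P N x = [set n x] by rewrite cards1.
apply/setP => y; rewrite !inE.
apply/andP/eqP => [[yB yNx] | ->]; last by split; last exact: (mem_orbit 'P x nN).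
apply: orbit_meet_class; first by rewrite (pblockT_eq partC BC nxB).
by rewrite (orbit_act 'P x nN).
Qed.

Lemma orbit_part_transverse :
  [/\ Gnormal G (orbit_part N), forall B, B \in C -> #|orbit_part N| = #|B|,
      forall O, O \in orbit_part N -> #|O| = #|C|
    & forall B O, B \in C -> O \in orbit_part N -> #|B :&: O| = 1%N].
Proof.
split=> [||_ /imsetP[x _ ->]|B _ BC /imsetP[x _ ->]].
- exact: orbit_part_Gnormal.
- exact: card_orbit_part.
- exact: card_orbit_classes.
- exact: card_class_meet_orbit.
Qed.

End TransversePartition.

Theorem lemma8p2 (T : finType) (L : {set {set T}}) (k c d : nat)
  (G : {group {perm T}}) (C : {set {set T}}) :
  linear_space L ->
  (forall l, l \in L -> #|l| = k) ->
  2 < k -> k < #|T| ->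
  automorphisms L G ->
  line_transitive L G ->
  Ginv_partition G C -> nontrivial_partition C ->
  #|C| = d -> (forall B, B \in C -> #|B| = c) ->
  Gnormal G C -> minimal_partition G C ->
  let K := part_kernel G C in
  let S := socle K in
  let X := 'C_G(K) in
  let Y := 'C_G(S) in
  (* (a) *)
  ((Y :&: K = 1 /\ ~~ abelian S) \/ (Y :&: K = S /\ elementary_abelian S)) /\
  (* (b) *)
  (X :&: K = 1 \/ (X :&: K = K /\ K = S /\ elementary_abelian S)) /\
  (* (c) *)
  (maximal_partition G C ->
   (exists N : {group {perm T}},
      [/\ N <| G, N :!=: 1, ~~ [transitive N, on [set: T] | 'P] & N :&: S = 1]) ->
   exists C' : {set {set T}},
     [/\ Gnormal G C', #|C'| = c, (forall B', B' \in C' -> #|B'| = d) &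
         forall B B', B \in C -> B' \in C' -> #|B :&: B'| = 1%N]).
Proof.
move=> linL card_line k_gt2 k_lt_v autG ltG invC ntC card_C card_class normC minC K S X Y.
have k_gt1 : 1 < k := ltnW k_gt2.
have c_gt1 := card_class_gt1 invC ntC card_class.
split; [|split].
- exact: (socle_cent_dichotomy linL card_line k_gt1 k_lt_v autG ltG invC card_class c_gt1
            ntC normC minC).
- exact: (kernel_cent_dichotomy linL card_line k_gt1 k_lt_v autG ltG invC card_class c_gt1
            ntC normC minC).
move=> maxC [N [nsNG ntN intrN trivNS]]; exists (orbit_part N).
have [normD card_D card_orbit meet1] :=
  orbit_part_transverse invC ntC normC minC maxC nsNG ntN intrN trivNS.
split=> //; last by move=> O /card_orbit->.
have /card_gt0P[x _] : 0 < #|T| by lia.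
by have Bx := pblockT_mem invC.1 x; rewrite (card_D _ Bx) card_class.
Qed.
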